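(* Let $\varphi$ be a non-trivial primitive Dirichlet character of conductor $f$, and let $N,M,L$ be positive integers with $f^2ML\mid N$ and $(fM,L)=1$. Then $12\,\tilde\beta_{\Gamma_0(N),\varphi,M,L}\in\mathbb{Z}[\zeta_f,\varphi]$.
   Context: $T_1=\prod_{l\mid M,\ l\nmid f}l$, $T_2=\prod_{q\mid L}q$ (over primes). $\xi$ is the primitive character associated to $\varphi^2$, of conductor $n$; $\tau(\chi)$ is the Gauss sum; $B_2(\chi)=m\sum_{a=0}^{m-1}\chi(a)((a/m)^2-a/m+1/6)$ for primitive $\chi$ of conductor $m$. $S_\varphi$ is the set of primes $q\mid T_2$ with $\varphi(q)=\pm1$ and $\phi(T_{2,\varphi})=\prod_{q\in S_\varphi}(q-1)$. For $p\mid f$, $\delta_p=1$ if $\nu_p(M)=0$ and $\nu_p(N/f^2)\ge1$, otherwise $\delta_p=0$. $\beta_{\Gamma_0(N),\varphi,M,L}=\frac{f^3T_1\phi(T_{2,\varphi})}{4n}\big(\prod_{p\mid f}p^{\nu_p(M)+\delta_p}\big)\frac{\tau(\varphi^{-1})}{\tau(\xi^{-1})}B_2(\xi^{-1})\prod_{p\mid fT_1}(1-\xi(p)p^{-2})$ and $\tilde\beta_{\Gamma_0(N),\varphi,M,L}=fT_1\beta_{\Gamma_0(N),\varphi,M,L}$. *)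

From HB Require Import structures.
From mathcomp Require Import all_boot all_order all_algebra.
From mathcomp Require Import algC.
Set Implicit Arguments. Unset Strict Implicit. Unset Printing Implicit Defensive.
Import Order.TTheory GRing.Theory Num.Theory.
Local Open Scope ring_scope.

Definition is_dchar (m : nat) (chi : nat -> algC) : Prop :=
  [/\ (0 < m)%N, chi 1%N = 1,
      (forall a b : nat, chi (a * b)%N = chi a * chi b),
      (forall a : nat, chi (a + m)%N = chi a)
    & (forall a : nat, (chi a == 0) = ~~ coprime a m)].

Definition primitive_dchar (m : nat) (chi : nat -> algC) : Prop :=
  is_dchar m chi /\
  forall d : nat, (d %| m)%N -> (d < m)%N ->
    ~ (forall a b : nat, coprime a m -> coprime b m ->
         a = b %[mod d] -> chi a = chi b).

Definition nontrivial_dchar (m : nat) (chi : nat -> algC) : Prop :=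
  exists a : nat, coprime a m /\ chi a != 1.

(* inverse character (chi^{-1}(a) = chi(a)^{-1}, and 0 where chi vanishes) *)
Definition dchar_inv (chi : nat -> algC) : nat -> algC := fun a => (chi a)^-1.

Definition gauss_sum (m : nat) (chi : nat -> algC) (z : algC) : algC :=
  \sum_(a < m) chi a * z ^+ a.

Definition B2 (m : nat) (chi : nat -> algC) : algC :=
  m%:R * \sum_(a < m) chi a *
     ((a%:R / m%:R) ^+ 2 - a%:R / m%:R + 1 / 6%:R).

Definition in_gen_subring (gens : algC -> Prop) (x : algC) : Prop :=
  forall S : pred algC,
    1 \in S ->
    {in S &, forall u v, u - v \in S} ->
    {in S &, forall u v, u * v \in S} ->
    (forall g, gens g -> g \in S) ->
    x \in S.

Definition Zzeta_phi (z : algC) (phi : nat -> algC) : algC -> Prop :=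
  in_gen_subring (fun g => g = z \/ exists a : nat, g = phi a).

Definition T1 (f M : nat) : nat := (\prod_(l <- primes M | ~~ (l %| f)%N) l)%N.

(* phi(T_{2,phi}) = prod over primes q | L with phi(q) = +-1 of (q-1) *)
Definition unit_val (phi : nat -> algC) (q : nat) : bool :=
  (phi q == 1) || (phi q == -1).
Definition phiT2 (phi : nat -> algC) (L : nat) : nat :=
  (\prod_(q <- primes L | unit_val phi q) (q - 1))%N.

Definition delta (f N M p : nat) : nat :=
  ((logn p M == 0%N) && (0 < logn p (N %/ f ^ 2))%N : bool).

(* beta_{Gamma_0(N),phi,M,L}; z is zeta_f, and zeta_n := z^(f/n). *)
Definition beta (f N M L n : nat) (phi xi : nat -> algC) (z : algC) : algC :=
  ((f ^ 3 * T1 f M * phiT2 phi L)%N%:R / (4 * n)%N%:R)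
  * (\prod_(p <- primes f) p ^ (logn p M + delta f N M p))%N%:R
  * (gauss_sum f (dchar_inv phi) z / gauss_sum n (dchar_inv xi) (z ^+ (f %/ n)))
  * B2 n (dchar_inv xi)
  * \prod_(p <- primes (f * T1 f M)) (1 - xi p / (p%:R) ^+ 2).

Definition beta_tilde (f N M L n : nat) (phi xi : nat -> algC) (z : algC) : algC :=
  (f * T1 f M)%N%:R * beta f N M L n phi xi z.

From HB Require Import structures.
From mathcomp Require Import all_boot all_order all_algebra.
From mathcomp Require Import algC cyclotomic zify ring.
Import Order.TTheory GRing.Theory Num.Theory.
Set Implicit Arguments. Unset Strict Implicit.
Local Open Scope ring_scope.

(* Since xi is defined modulo f, its conductor n divides f, so zeta_n = zeta_f^(f/n)
   and the values of xi, xi^-1, phi^-1 and the Gauss sums tau(phi^-1), tau(xi) all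
   lie in Z[zeta_f, phi].  The relation tau(xi^-1) tau(xi) = xi(-1) n turns the
   division by tau(xi^-1) into a multiplication by tau(xi) / n, and the Euler factors
   combine into prod (p^2 - xi(p)) / prod p^2 over the primes p | f T_1 prime to n.
   The remaining rational coefficient is an integer.  For n > 1, xi^-1 sums to 0, so
   n B_2(xi^-1) = sum_a xi^-1(a) (a^2 - a n), and n^3 prod p^2 divides f^4 T_1^2.  For
   n = 1, B_2 = 1/6 and the missing factor 2 comes from f^2 if f is even, and from
   p^2 - 1 for an odd prime p | f otherwise (f > 1 as phi is non-trivial). *)

Lemma eqn_mod1_coprime x n : (x = 1 %[mod n])%N -> coprime x n.
Proof. by move=> e; rewrite -coprime_modl e coprime_modl coprime1n. Qed.

Lemma modn_inv_exists m a : (0 < m)%N -> coprime a m ->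
  exists b, (a * b = 1 %[mod m])%N.
Proof.
move=> m_gt0; case: (posnP a) => [-> | a_gt0].
  by rewrite /coprime gcd0n => /eqP ->; exists 0%N; rewrite !modn1.
case: (egcdnP m a_gt0) => u v Bezout _ /eqP co.
by exists u; rewrite mulnC Bezout co -modnDml modnMl.
Qed.

Section DirichletCharacter.

Variables (m : nat) (chi : nat -> algC).
Hypothesis chiP : is_dchar m chi.

Lemma dchar_gt0 : (0 < m)%N. Proof. by case: chiP. Qed.

Lemma dchar1 : chi 1 = 1. Proof. by case: chiP. Qed.

Lemma dcharM a b : chi (a * b)%N = chi a * chi b. Proof. by case: chiP. Qed.

Lemma dchar_eq0 a : ~~ coprime a m -> chi a = 0.
Proof. by case: chiP => _ _ _ _ chi_eq0 /negbTE co; apply/eqP; rewrite chi_eq0 co. Qed.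

Lemma dchar_modn a : chi (a %% m)%N = chi a.
Proof.
have [_ _ _ chi_per _] := chiP.
rewrite {2}(divn_eq a m) addnC; elim: (a %/ m)%N => [|k IHk]; first by rewrite mul0n addn0.
by rewrite mulSn addnCA addnC chi_per.
Qed.

Lemma dchar_eqmod a b : (a = b %[mod m])%N -> chi a = chi b.
Proof. by move=> eq_ab; rewrite -dchar_modn eq_ab dchar_modn. Qed.

Lemma dchar_mod1 a : m = 1%N -> chi a = 1.
Proof. by move=> m1; rewrite (@dchar_eqmod a 1) ?dchar1 // m1 !modn1. Qed.

Lemma dchar_inv_eq a b : (a * b = 1 %[mod m])%N -> dchar_inv chi a = chi b.
Proof.
move=> ab1; have chi_ab : chi a * chi b = 1 by rewrite -dcharM (dchar_eqmod ab1) dchar1.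
have chi_a_neq0 : chi a != 0.
  by apply/eqP=> chi_a0; move: chi_ab; rewrite chi_a0 mul0r => /esym/eqP; rewrite oner_eq0.
by apply: (mulfI chi_a_neq0); rewrite /dchar_inv mulfV.
Qed.

Lemma dchar_inv_dchar : is_dchar m (dchar_inv chi).
Proof.
case: chiP => m_gt0 chi1 chiM chi_per chi_eq0; split; rewrite /dchar_inv //.
- by rewrite chi1 invr1.
- by move=> a b; rewrite chiM invfM.
- by move=> a; rewrite chi_per.
- by move=> a; rewrite invr_eq0 chi_eq0.
Qed.

Lemma dchar_eqmod_of_ker d : (d %| m)%N ->
    (forall c, coprime c m -> (c = 1 %[mod d])%N -> chi c = 1) ->
  forall a b, coprime a m -> coprime b m -> (a = b %[mod d])%N -> chi a = chi b.
Proof.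
move=> dm ker a b co_a co_b ab.
have [b' bb'] := modn_inv_exists dchar_gt0 co_b.
have co_b' : coprime b' m by move: (eqn_mod1_coprime bb'); rewrite coprimeMl => /andP[].
have ab'1 : (a * b' = 1 %[mod d])%N.
  by rewrite -modnMml ab modnMml -(modn_dvdm _ dm) bb' modn_dvdm.
have := ker _ _ ab'1; rewrite coprimeMl co_a co_b' dcharM => /(_ isT) chi_ab'.
have chi_bb' : chi b * chi b' = 1 by rewrite -dcharM (dchar_eqmod bb') dchar1.
by rewrite -[chi a]mulr1 -chi_bb' mulrCA chi_ab' mulr1.
Qed.

End DirichletCharacter.

Lemma primitive_dchar_inv n chi :
  primitive_dchar n chi -> primitive_dchar n (dchar_inv chi).
Proof.
case=> chiP chi_prim; split; first exact: dchar_inv_dchar.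
move=> d dn d_lt_n chi_inv_mod; apply: (chi_prim d dn d_lt_n) => a b co_a co_b ab.
exact/invr_inj/chi_inv_mod.
Qed.

Lemma dchar_nontrivial_gt1 f phi :
  is_dchar f phi -> nontrivial_dchar f phi -> (1 < f)%N.
Proof.
move=> phiP [a [_]]; rewrite ltn_neqAle eq_sym (dchar_gt0 phiP) andbT.
by apply: contraNneq => f1; rewrite (dchar_mod1 phiP).
Qed.

Lemma primitive_dchar_dvd n xi f : primitive_dchar n xi -> (0 < f)%N ->
  (forall c, (c = 1 %[mod f])%N -> xi c = 1) -> (n %| f)%N.
Proof.
case=> xiP xi_prim f_gt0 xi_ker; set g := gcdn n f.
have g_dvd_n : (g %| n)%N by apply: dvdn_gcdl.
have [<- | g_neq_n] := eqVneq g n; first exact: dvdn_gcdr.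
have g_lt_n : (g < n)%N by rewrite ltn_neqAle g_neq_n dvdn_leq ?(dchar_gt0 xiP).
case: (xi_prim g g_dvd_n g_lt_n); apply: (dchar_eqmod_of_ker xiP g_dvd_n) => c co_c c1.
have c_gt0 : (0 < c)%N.
  case: c co_c {c1} => // /eqP; rewrite gcd0n => n1.
  by move: g_lt_n; rewrite /g n1 gcd1n.
have /dvdnP[k c_1] : (g %| c - 1)%N by rewrite -eqn_mod_dvd // c1.
case: (egcdnP n f_gt0) => u v Bezout _; rewrite gcdnC -/g in Bezout.
(* c + k v n is congruent to c modulo n and to 1 modulo f *)
have lift_c : (c + k * v * n = 1 + k * u * f)%N.
  by rewrite -[(k * u * f)%N]mulnA Bezout mulnDr -c_1; lia.
rewrite -(dchar_eqmod xiP (a := c + k * v * n)); last by rewrite -modnDmr modnMl addn0.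
by rewrite lift_c xi_ker // -modnDmr modnMl addn0.
Qed.

Lemma coprime_lift n f a : (0 < f)%N -> (n %| f)%N -> coprime a n ->
  exists x, (x = a %[mod n])%N /\ coprime x f.
Proof.
move=> f_gt0 nf co_an.
(* every prime of f divides exactly one of a and n t *)
pose t := (\prod_(p <- primes f | ~~ (p %| a)%N) p)%N.
exists (a + n * t)%N; split; first by rewrite -modnDmr modnMr addn0.
apply/negPn/negP => not_co.
have g_gt1 : (1 < gcdn (a + n * t) f)%N.
  by move: not_co; rewrite /coprime ltn_neqAle eq_sym gcdn_gt0 f_gt0 orbT andbT.
set p := pdiv (gcdn (a + n * t) f); have p_pr : prime p := pdiv_prime g_gt1.
have p_dvd_g : (p %| gcdn (a + n * t) f)%N := pdiv_dvd _.
have p_dvd_x : (p %| a + n * t)%N by apply: dvdn_trans p_dvd_g (dvdn_gcdl _ _).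
have p_dvd_f : (p %| f)%N by apply: dvdn_trans p_dvd_g (dvdn_gcdr _ _).
have p_dvd_t : (p %| t)%N = ~~ (p %| a)%N.
  rewrite /t Euclid_dvd_prod // -big_filter big_has; apply/hasP/idP => [[q]|pa].
    rewrite mem_filter mem_primes => /and4P[qa q_pr _ _].
    by rewrite dvdn_prime2 // => /eqP->.
  by exists p; rewrite // mem_filter pa mem_primes p_pr f_gt0.
have [p_dvd_a | p_ndvd_a] := boolP (p %| a)%N.
  move: p_dvd_x; rewrite dvdn_addr // Euclid_dvdM // p_dvd_t p_dvd_a orbF => p_dvd_n.
  have : (p %| gcdn a n)%N by rewrite dvdn_gcd p_dvd_a.
  by rewrite (eqP co_an) dvdn1 => /eqP p1; rewrite p1 in p_pr.
by move: p_dvd_x; rewrite dvdn_addl ?(negbTE p_ndvd_a) // dvdn_mull // p_dvd_t.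
Qed.

Lemma big_ord_mulmod (V : nmodType) n c (F : nat -> V) : (0 < n)%N -> coprime c n ->
    (forall x, F (x %% n)%N = F x) ->
  \sum_(a < n) F (c * a)%N = \sum_(a < n) F a.
Proof.
move=> n_gt0 co_c F_per; have [c' cc'] := modn_inv_exists n_gt0 co_c.
pose h (a : 'I_n) : 'I_n := Ordinal (ltn_pmod (c * a) n_gt0).
have h_inj : injective h.
  move=> x y /(congr1 val) /= eq_xy; apply: val_inj.
  have cancel_c t : (c' * (c * t) = t %[mod n])%N.
    by rewrite mulnA -modnMml (mulnC c') cc' modnMml mul1n.
  rewrite /= -(modn_small (ltn_ord x)) -(modn_small (ltn_ord y)).
  by rewrite -(cancel_c x) -(cancel_c y) -modnMmr eq_xy modnMmr.
by rewrite [RHS](reindex_inj h_inj); apply: eq_bigr => a _; rewrite /= F_per.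
Qed.

Lemma sum_prim_root_expM (R : fieldType) n (w : R) k : n.-primitive_root w ->
  \sum_(b < n) w ^+ (b * k)%N = if (n %| k)%N then n%:R else 0.
Proof.
move=> w_prim; case: ifP => [/dvdnP[q ->] | n_ndvd_k].
  rewrite (eq_bigr (fun _ => 1)) ?sumr_const ?card_ord // => b _.
  by rewrite mulnA mulnC exprM (prim_expr_order w_prim) expr1n.
have wk_neq1 : w ^+ k != 1.
  by rewrite -(expr0 w) (eq_prim_root_expr w_prim) mod0n -/(n %| k)%N n_ndvd_k.
case: n w_prim n_ndvd_k => [|n] w_prim _; first by rewrite big_ord0.
have := expfS_eq1 (w ^+ k) n.
rewrite -exprM mulnC exprM (prim_expr_order w_prim) expr1n eqxx (negbTE wk_neq1).
by move=> /esym/eqP sum0; rewrite -[RHS]sum0; apply: eq_bigr => b _; rewrite mulnC exprM.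
Qed.

Section GaussSum.

Variables (n : nat) (chi : nat -> algC) (w : algC).
Hypotheses (chi_prim : primitive_dchar n chi) (w_prim : n.-primitive_root w).

Let chiP : is_dchar n chi := proj1 chi_prim.
Let n_gt0 : (0 < n)%N := dchar_gt0 chiP.

Let twist_term_modn b x :
  chi (x %% n)%N * w ^+ (x %% n * b)%N = chi x * w ^+ (x * b)%N.
Proof.
by rewrite (dchar_modn chiP) -(prim_expr_mod w_prim) modnMml (prim_expr_mod w_prim).
Qed.

(* A nonzero twisted sum at a non-unit b would make chi defined modulo n / gcd(b, n). *)
Lemma twisted_gauss_sum_eq0 b : ~~ coprime b n ->
  \sum_(a < n) chi a * w ^+ (a * b)%N = 0.
Proof.
move=> nco_b; set g := gcdn b n; set d := (n %/ g)%N.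
have g_gt1 : (1 < g)%N by rewrite ltn_neqAle eq_sym nco_b gcdn_gt0 n_gt0 orbT.
have n_dg : n = (d * g)%N by rewrite divnK // dvdn_gcdr.
have d_dvd_n : (d %| n)%N by apply/dvdnP; exists g; rewrite mulnC.
have d_lt_n : (d < n)%N by rewrite ltn_Pdiv.
apply/eqP/negPn/negP => sum_neq0.
case: chi_prim => _ /(_ d d_dvd_n d_lt_n); apply.
apply: (dchar_eqmod_of_ker chiP d_dvd_n) => c co_c c1.
have cg : (c * g = g %[mod n])%N.
  by rewrite n_dg -muln_modl c1 muln_modl mul1n.
have cb : (c * b = b %[mod n])%N.
  by rewrite -(divnK (dvdn_gcdl b n)) -/g mulnCA -modnMmr cg modnMmr.
apply: (mulIf sum_neq0); rewrite mul1r.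
rewrite -{2}(big_ord_mulmod (F := fun x => chi x * w ^+ (x * b)%N) n_gt0 co_c)
  ?mulr_sumr; last exact: twist_term_modn.
apply: eq_bigr => a _; rewrite (dcharM chiP) -mulrA; congr (_ * (_ * _)).
rewrite -[in RHS](prim_expr_mod w_prim) mulnAC [(c * b * a)%N]mulnC.
rewrite -modnMmr cb modnMmr.
by rewrite (prim_expr_mod w_prim).
Qed.

Lemma twisted_gauss_sum b :
  \sum_(a < n) chi a * w ^+ (a * b)%N = dchar_inv chi b * gauss_sum n chi w.
Proof.
have [co_b | nco_b] := boolP (coprime b n); last first.
  by rewrite twisted_gauss_sum_eq0 // /dchar_inv (dchar_eq0 chiP nco_b) invr0 mul0r.
have [b' bb'] := modn_inv_exists n_gt0 co_b.
rewrite (dchar_inv_eq chiP bb') /gauss_sum.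
rewrite -(big_ord_mulmod (F := fun x => chi x * w ^+ x) n_gt0 co_b) ?mulr_sumr; last first.
  by move=> x; rewrite (dchar_modn chiP) (prim_expr_mod w_prim).
apply: eq_bigr => a _; rewrite mulrA -(dcharM chiP) [(b * a)%N]mulnC; congr (_ * _).
apply: (dchar_eqmod chiP).
by rewrite mulnCA -modnMmr (mulnC b') bb' modnMmr muln1.
Qed.

Lemma gauss_sum_inv_mul :
  gauss_sum n (dchar_inv chi) w * gauss_sum n chi w = chi n.-1 * n%:R.
Proof.
rewrite {1}/gauss_sum mulr_suml.
transitivity (\sum_(b < n) \sum_(a < n) chi a * w ^+ (b * a.+1)%N).
  apply: eq_bigr => b _; rewrite mulrAC -twisted_gauss_sum mulr_suml.
  by apply: eq_bigr => a _; rewrite -mulrA -exprD mulnSr [(b * a)%N]mulnC.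
rewrite exchange_big /=.
under eq_bigr => a _ do rewrite -mulr_sumr sum_prim_root_expM //.
case: n n_gt0 => // m _; rewrite (bigD1 ord_max) //= dvdnn big1 ?addr0 // => a a_neq_max.
case: ifP => [/dvdn_leq a_ge | _]; last by rewrite mulr0.
by case/eqP: a_neq_max; apply: val_inj => /=; move: (ltn_ord a); lia.
Qed.

Lemma invr_gauss_sum_inv :
  (gauss_sum n (dchar_inv chi) w)^-1 = gauss_sum n chi w * dchar_inv chi n.-1 / n%:R.
Proof.
have chi_neq0 : chi n.-1 != 0.
  by have [_ _ _ _ ->] := chiP; rewrite negbK coprimePn.
have n_neq0 : n%:R != 0 :> algC by rewrite pnatr_eq0 -lt0n.
apply: mulr1_eq; rewrite !mulrA gauss_sum_inv_mul /dchar_inv.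
by field; rewrite chi_neq0 n_neq0.
Qed.

End GaussSum.

Lemma sum_primitive_dchar_eq0 n chi : primitive_dchar n chi -> (1 < n)%N ->
  \sum_(a < n) chi a = 0.
Proof.
move=> chi_prim n_gt1; have [w w_prim] := C_prim_root_exists (ltnW n_gt1).
have nco0 : ~~ coprime 0 n by rewrite /coprime gcd0n neq_ltn n_gt1 orbT.
rewrite -[RHS](twisted_gauss_sum_eq0 chi_prim w_prim nco0).
by apply: eq_bigr => a _; rewrite muln0 expr0 mulr1.
Qed.

Lemma B2_primitive n chi : primitive_dchar n chi -> (1 < n)%N ->
  B2 n chi = (\sum_(a < n) chi a * (a%:R ^+ 2 - a%:R * n%:R)) / n%:R.
Proof.
move=> chi_prim n_gt1; have n_neq0 : n%:R != 0 :> algC by rewrite pnatr_eq0 gtn_eqF // ltnW.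
transitivity ((\sum_(a < n) chi a * (a%:R ^+ 2 - a%:R * n%:R)) / n%:R
              + n%:R / 6%:R * \sum_(a < n) chi a).
  rewrite /B2 mulr_suml !mulr_sumr -big_split; apply: eq_bigr => a _ /=.
  by field.
by rewrite sum_primitive_dchar_eq0 // mulr0 addr0.
Qed.

Lemma B2_conductor1 chi : chi 0%N = 1 -> B2 1 chi = 1 / 6%:R.
Proof. by move=> chi0; rewrite /B2 big_ord1 /= chi0; field. Qed.

Lemma prod_euler_factor n chi (r : seq nat) : is_dchar n chi -> all prime r ->
  \prod_(p <- r) (1 - chi p / p%:R ^+ 2) =
  \prod_(p <- r | ~~ (p %| n)%N) (p%:R ^+ 2 - chi p)
    / (\prod_(p <- r | ~~ (p %| n)%N) p ^ 2)%N%:R.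
Proof.
move=> chiP /allP r_prime.
rewrite (bigID (fun p => (p %| n)%N)) /= big_seq_cond big1.
  rewrite mul1r natr_prod -prodf_div big_seq_cond [RHS]big_seq_cond.
  apply: eq_bigr => p /andP[/r_prime p_pr _].
  have p_neq0 : p%:R != 0 :> algC by rewrite pnatr_eq0 -lt0n prime_gt0.
  by rewrite natrX; field.
move=> p /andP[/r_prime p_pr p_dvd_n].
by rewrite (dchar_eq0 chiP) ?mul0r ?subr0 // prime_coprime // negbK.
Qed.

Lemma prod_uniq_primes_dvd (s : seq nat) X : uniq s -> all prime s ->
  {in s, forall p, p %| X}%N -> (\prod_(p <- s) p %| X)%N.
Proof.
elim: s => [|p s IHs] /=; first by rewrite big_nil dvd1n.
move=> /andP[p_notin_s s_uniq] /andP[p_pr s_prime] s_dvd.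
rewrite big_cons Gauss_dvd; last first.
  rewrite prime_coprime // Euclid_dvd_prod // big_has; apply/hasPn => q q_s.
  rewrite dvdn_prime2 //; last exact: (allP s_prime).
  by apply: contraNneq p_notin_s => ->.
rewrite s_dvd ?mem_head // IHs // => q q_s.
by rewrite s_dvd // inE q_s orbT.
Qed.

Lemma prod_sq_primes_ndvd_dvd X n : (0 < X)%N -> (n %| X)%N ->
  (\prod_(p <- primes X | ~~ (p %| n)%N) p ^ 2 %| (X %/ n) ^ 2)%N.
Proof.
move=> X_gt0 nX; rewrite -(big_morph _ (fun x y => expnMn x y 2) (exp1n 2)).
rewrite dvdn_exp2r // -big_filter prod_uniq_primes_dvd ?filter_uniq ?primes_uniq //.
  by apply/allP => p; rewrite mem_filter mem_primes => /andP[_ /andP[]].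
move=> p; rewrite mem_filter mem_primes => /andP[p_ndvd_n /and3P[p_pr _]].
by rewrite -{1}(divnK nX) Euclid_dvdM // (negbTE p_ndvd_n) orbF.
Qed.

Lemma dvdn_cube_mul n f T D : (n %| f)%N -> (D %| (f * T %/ n) ^ 2)%N ->
  (n ^ 3 * D %| f ^ 4 * T ^ 2)%N.
Proof.
move=> nf; rewrite -(divnK nf) -mulnAC; set m := (f %/ n)%N.
have [-> _ | n_gt0] := posnP n; first by rewrite muln0 exp0n // mul0n dvdn0.
rewrite mulnK // => D_dvd.
have -> : ((m * n) ^ 4 * T ^ 2 = n ^ 3 * ((m * T) ^ 2 * (n * m ^ 2)))%N by ring.
by rewrite dvdn_pmul2l ?expn_gt0 ?n_gt0 // dvdn_mulr.
Qed.

Lemma big_primes_ndvd1 (R : Type) (idx : R) (op : R -> R -> R) X (F : nat -> R) :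
  \big[op/idx]_(p <- primes X | ~~ (p %| 1)%N) F p = \big[op/idx]_(p <- primes X) F p.
Proof.
rewrite big_seq_cond [RHS]big_seq_cond; apply: eq_bigl => p.
case: (boolP (p \in primes X)) => //=.
by rewrite mem_primes dvdn1 => /andP[/prime_gt1/gtn_eqF->].
Qed.

Lemma two_dvd_sq_mul_prod_primes f X : (1 < f)%N -> (0 < X)%N -> (f %| X)%N ->
  (2 %| f ^ 2 * \prod_(p <- primes X) (p ^ 2 - 1))%N.
Proof.
move=> f_gt1 X_gt0 fX; have [f_odd | f_even] := boolP (odd f); last first.
  by rewrite dvdn_mulr // dvdn2 oddX /= (negbTE f_even).
set p := pdiv f; have p_pr : prime p := pdiv_prime f_gt1.
have p_odd : odd p.
  apply: contraTT f_odd; rewrite -!dvdn2 => /(dvdn_trans)->//.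
  exact: pdiv_dvd.
apply/dvdn_mull/(dvdn_trans (n := p ^ 2 - 1)).
  by rewrite dvdn2 oddB ?expn_gt0 ?prime_gt0 // oddX p_odd.
rewrite (bigD1_seq p) ?primes_uniq ?dvdn_mulr // mem_primes p_pr X_gt0.
exact: dvdn_trans (pdiv_dvd f) fX.
Qed.

Section Integrality.

Variable S : pred algC.
Hypothesis S_subring : GRing.subring_closed S.
HB.instance Definition _ := GRing.isSubringClosed.Build algC S S_subring.

Lemma rpred_natf_divM (k d : nat) x : (d %| k)%N -> x \in S -> k%:R / d%:R * x \in S.
Proof. by move=> dk Sx; rewrite -natf_div // rpredM ?rpred_nat. Qed.

Lemma rpred_dchar_inv m chi a : is_dchar m chi -> (forall b, chi b \in S) ->
  dchar_inv chi a \in S.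
Proof.
move=> chiP S_chi; have [co_a | nco_a] := boolP (coprime a m).
  have [b ab1] := modn_inv_exists (dchar_gt0 chiP) co_a.
  by rewrite (dchar_inv_eq chiP ab1).
by rewrite /dchar_inv (dchar_eq0 chiP nco_a) invr0 rpred0.
Qed.

Section Beta.

Variables (f N M L n : nat) (phi xi : nat -> algC) (z : algC).
Hypotheses (phiP : primitive_dchar f phi) (xiP : primitive_dchar n xi).
Hypotheses (xi_phi : forall a, coprime a f -> xi a = phi a ^+ 2).
Hypotheses (z_prim : f.-primitive_root z) (Sz : z \in S) (S_phi : forall a, phi a \in S).

Let f_gt0 : (0 < f)%N := dchar_gt0 (proj1 phiP).
Let n_gt0 : (0 < n)%N := dchar_gt0 (proj1 xiP).

Lemma conductor_xi_dvd : (n %| f)%N.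
Proof.
apply: primitive_dchar_dvd xiP f_gt0 _ => c c1.
rewrite xi_phi ?eqn_mod1_coprime //.
by rewrite (dchar_eqmod (proj1 phiP) c1) (dchar1 (proj1 phiP)) expr1n.
Qed.

Let w := z ^+ (f %/ n).
Let w_prim : n.-primitive_root w := dvdn_prim_root z_prim conductor_xi_dvd.

Lemma rpred_xi a : xi a \in S.
Proof.
have [co_a | nco_a] := boolP (coprime a n).
  have [x [xa co_x]] := coprime_lift f_gt0 conductor_xi_dvd co_a.
  by rewrite -(dchar_eqmod (proj1 xiP) xa) xi_phi // rpredX.
by rewrite (dchar_eq0 (proj1 xiP)) ?rpred0.
Qed.

Let T := T1 f M.
Let Q := (\prod_(p <- primes f) p ^ (logn p M + delta f N M p))%N.
Let P2 := phiT2 phi L.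
Let tau_phi := gauss_sum f (dchar_inv phi) z.
Let tau_xi := gauss_sum n xi w.
Let K := (f ^ 4 * T ^ 2 * P2 * Q)%N.
Let Dsq := (\prod_(p <- primes (f * T) | ~~ (p %| n)%N) p ^ 2)%N.
Let Ep := \prod_(p <- primes (f * T) | ~~ (p %| n)%N) (p%:R ^+ 2 - xi p).

Let T_gt0 : (0 < T)%N.
Proof.
rewrite /T /T1 big_seq_cond prodn_cond_gt0 // => l /andP[].
by rewrite mem_primes => /andP[/prime_gt0].
Qed.

Let fT_gt0 : (0 < f * T)%N. Proof. by rewrite muln_gt0 f_gt0 T_gt0. Qed.

Let Dsq_neq0 : Dsq%:R != 0 :> algC.
Proof.
rewrite pnatr_eq0 -lt0n /Dsq big_seq_cond prodn_cond_gt0 // => p /andP[].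
by rewrite mem_primes expn_gt0 => /andP[/prime_gt0->].
Qed.

Lemma twelve_beta_tildeE : 12%:R * beta_tilde f N M L n phi xi z =
  (3 * K)%N%:R / (n ^ 2 * Dsq)%N%:R
  * (tau_phi * tau_xi * dchar_inv xi n.-1 * Ep * B2 n (dchar_inv xi)).
Proof.
have n_neq0 : n%:R != 0 :> algC by rewrite pnatr_eq0 -lt0n.
rewrite /beta_tilde /beta -/T (prod_euler_factor (proj1 xiP)); last first.
  by apply/allP => p; rewrite mem_primes => /andP[].
rewrite (invr_gauss_sum_inv xiP w_prim) -/Q -/P2 -/K -/tau_phi -/tau_xi -/Ep -/Dsq.
by rewrite /K !natrM; field; rewrite Dsq_neq0 n_neq0.
Qed.

Let S_w : w \in S. Proof. exact: rpredX. Qed.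

Lemma rpred_gauss_sums : tau_phi * tau_xi * dchar_inv xi n.-1 \in S.
Proof.
rewrite /tau_phi /tau_xi /gauss_sum !rpredM ?rpred_sum // => [a _ | a _ |].
- by rewrite rpredM ?rpredX //; apply: rpred_dchar_inv (proj1 phiP) S_phi.
- by rewrite rpredM ?rpredX ?rpred_xi.
- exact: rpred_dchar_inv (proj1 xiP) rpred_xi.
Qed.

Lemma twelve_beta_tilde_in_cond_gt1 : (1 < n)%N ->
  12%:R * beta_tilde f N M L n phi xi z \in S.
Proof.
move=> n_gt1.
rewrite twelve_beta_tildeE (B2_primitive (primitive_dchar_inv xiP) n_gt1).
have mul_divn k d (x y : algC) :
    k%:R / d%:R * (x * (y / n%:R)) = k%:R / (d * n)%N%:R * (x * y).
  by rewrite natrM invfM; ring.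
rewrite mul_divn; apply: rpred_natf_divM.
  have -> : (n ^ 2 * Dsq * n = n ^ 3 * Dsq)%N by ring.
  apply/dvdn_mull/dvdn_mulr/dvdn_mulr/dvdn_cube_mul; first exact: conductor_xi_dvd.
  exact: prod_sq_primes_ndvd_dvd fT_gt0 (dvdn_mulr T conductor_xi_dvd).
rewrite rpredM ?rpred_sum // => [|a _].
  rewrite rpredM ?rpred_gauss_sums ?rpred_prod // => p _.
  by rewrite rpredB ?rpredX ?rpred_nat ?rpred_xi.
rewrite rpredM ?rpredB ?rpredM ?rpredX ?rpred_nat //.
exact: rpred_dchar_inv (proj1 xiP) rpred_xi.
Qed.

Lemma twelve_beta_tilde_in_cond1 : n = 1%N -> (1 < f)%N ->
  12%:R * beta_tilde f N M L n phi xi z \in S.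
Proof.
move=> n1 f_gt1; have xi1 a : xi a = 1 := dchar_mod1 (proj1 xiP) a n1.
set E := (\prod_(p <- primes (f * T)) (p ^ 2 - 1))%N.
have Ep_nat : Ep = E%:R.
  rewrite /Ep n1 big_primes_ndvd1 natr_prod; apply: eq_big_seq => p.
  rewrite mem_primes => /andP[/prime_gt0 p_gt0 _].
  by rewrite xi1 natrB ?expn_gt0 ?p_gt0 // natrX.
have B2_xi : B2 n (dchar_inv xi) = 1 / 6%:R.
  by rewrite n1 B2_conductor1 // /dchar_inv xi1 invr1.
have nDsq : (n ^ 2 * Dsq = Dsq)%N by rewrite n1 exp1n mul1n.
rewrite twelve_beta_tildeE Ep_nat B2_xi nDsq.
set G := tau_phi * tau_xi * dchar_inv xi n.-1.
have -> : (3 * K)%N%:R / Dsq%:R * (G * E%:R * (1 / 6%:R))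
          = (K * E)%N%:R / (2 * Dsq)%N%:R * G.
  by rewrite !natrM; field.
apply: rpred_natf_divM rpred_gauss_sums.
have Dsq_dvd : (Dsq %| (f * T) ^ 2)%N.
  by rewrite /Dsq n1 -{2}(divn1 (f * T)) prod_sq_primes_ndvd_dvd.
have -> : (K * E = (f * T) ^ 2 * (f ^ 2 * E) * (P2 * Q))%N by rewrite /K; ring.
rewrite dvdn_mulr // mulnC dvdn_mul //.
exact: two_dvd_sq_mul_prod_primes f_gt1 fT_gt0 (dvdn_mulr T (dvdnn f)).
Qed.

End Beta.

End Integrality.

Theorem mainTheorem7 (f N M L n : nat) (phi xi : nat -> algC) (z : algC) :
  primitive_dchar f phi ->
  nontrivial_dchar f phi ->
  (0 < N)%N -> (0 < M)%N -> (0 < L)%N ->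
  (f ^ 2 * M * L %| N)%N ->
  coprime (f * M) L ->
  primitive_dchar n xi ->
  (forall a : nat, coprime a f -> xi a = phi a ^+ 2) ->
  f.-primitive_root z ->
  Zzeta_phi z phi (12%:R * beta_tilde f N M L n phi xi z).
Proof.
move=> phiP phi_nontriv _ _ _ _ _ xiP xi_phi z_prim S S1 SB SM S_gen.
have S_subring : GRing.subring_closed S by split.
have Sz : z \in S by apply: S_gen; left.
have S_phi a : phi a \in S by apply: S_gen; right; exists a.
have [n_lt1 | n_gt1 | n1] := ltngtP n 1.
- by move: (dchar_gt0 (proj1 xiP)); rewrite lt0n -leqn0 -ltnS n_lt1.
- exact: twelve_beta_tilde_in_cond_gt1.
- exact: twelve_beta_tilde_in_cond1 (dchar_nontrivial_gt1 (proj1 phiP) phi_nontriv).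
Qed.
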